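(* If the NNF DAG of $F$ is in wDNNF, then for every $j\in\{1,\ldots,n\}$ the implication $$\hat F(\mathbf{1}^j,\mathbf{X}_{j+1}^n,\mathbf{1}^j,\overline{\mathbf{X}}_{j+1}^n,\mathbf{Y})\Rightarrow \hat F(\mathbf{1}^{j-1}0,\mathbf{X}_{j+1}^n,\mathbf{1}^{j-1}1,\overline{\mathbf{X}}_{j+1}^n,\mathbf{Y})\vee \hat F(\mathbf{1}^{j-1}1,\mathbf{X}_{j+1}^n,\mathbf{1}^{j-1}0,\overline{\mathbf{X}}_{j+1}^n,\mathbf{Y})$$ is valid (for all values of $\mathbf{X}_{j+1}^n,\overline{\mathbf{X}}_{j+1}^n,\mathbf{Y}$).
   Context: $\mathbf{X}=(x_1,\ldots,x_n)$ are outputs and $\mathbf{Y}=(y_1,\ldots,y_m)$ inputs; $\mathbf{X}_i^j=(x_i,\ldots,x_j)$. An NNF formula uses only $\wedge,\vee$ and negations applied to variables, represented as a rooted DAG with $\wedge/\vee$ internal nodes and literal leaves. For an internal node representing subformula $\alpha$, $\mathrm{lits}(\alpha)$ is the set of literals labeling leaves having a path to that node. The NNF DAG is in wDNNF if for every $\wedge$-node representing $\alpha=\alpha_1\wedge\cdots\wedge\alpha_k$ there is no literal $l$ and distinct $p,q$ with $l\in\mathrm{lits}(\alpha_p)$ and $\neg l\in\mathrm{lits}(\alpha_q)$. $\hat F(\mathbf{X},\overline{\mathbf{X}},\mathbf{Y})$ is obtained from the NNF DAG of $F$ by replacing each leaf $\neg x_i$ ($x_i\in\mathbf{X}$) by a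 fresh variable $\overline{x_i}$. For length-$j$ bit-vectors $\mathbf{b},\mathbf{c}$, $\hat F(\mathbf{b},\mathbf{X}_{j+1}^n,\mathbf{c},\overline{\mathbf{X}}_{j+1}^n,\mathbf{Y})$ sets $(x_1,\ldots,x_j):=\mathbf{b}$ and $(\overline{x_1},\ldots,\overline{x_j}):=\mathbf{c}$. $\mathbf{1}^{j-1}0$ is $j-1$ ones followed by $0$; $\mathbf{1}^{j-1}1=\mathbf{1}^j$ is all ones. *)

From mathcomp Require Import all_boot.
Set Implicit Arguments. Unset Strict Implicit. Unset Printing Implicit Defensive.

(* A literal is (isX, index, positive):
   - (true,  i, true)  is x_{i+1},   (true,  i, false) is ~ x_{i+1}   (outputs X, 0-based index)
   - (false, i, true)  is y_{i+1},   (false, i, false) is ~ y_{i+1}   (inputs Y) *)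
Definition literal := (bool * nat * bool)%type.

Definition neg_lit (l : literal) : literal := (l.1.1, l.1.2, ~~ l.2).

(* A rooted NNF DAG is represented by its tree unfolding (same lits sets,
   same semantics, same wDNNF condition at each AND node). *)
Inductive nnf : Type :=
| NLit of bool & nat & bool
| NAnd of seq nnf
| NOr  of seq nnf.

Fixpoint lits (f : nnf) : seq literal :=
  match f with
  | NLit b i p => [:: (b, i, p)]
  | NAnd fs => flatten (map lits fs)
  | NOr fs => flatten (map lits fs)
  end.

Fixpoint xvars_below (n : nat) (f : nnf) : bool :=
  match f with
  | NLit b i _ => b ==> (i < n)
  | NAnd fs => all (xvars_below n) fs
  | NOr fs => all (xvars_below n) fs
  end.

Definition and_ok (fs : seq nnf) : bool :=
  [forall p : 'I_(size fs), forall q : 'I_(size fs),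
     (p != q) ==>
     ~~ has (fun l => neg_lit l \in lits (nth (NOr [::]) fs q))
            (lits (nth (NOr [::]) fs p))].

Fixpoint wDNNF (f : nnf) : bool :=
  match f with
  | NLit _ _ _ => true
  | NAnd fs => all wDNNF fs && and_ok fs
  | NOr fs => all wDNNF fs
  end.

(* Evaluation of F-hat(X, Xbar, Y): leaf ~x_i is replaced by the fresh
   variable xbar_i; Y-literals keep their usual meaning. *)
Fixpoint eval_hat (ax axb ay : nat -> bool) (f : nnf) : bool :=
  match f with
  | NLit true i true => ax i
  | NLit true i false => axb i
  | NLit false i p => if p then ay i else ~~ ay i
  | NAnd fs => all (eval_hat ax axb ay) fs
  | NOr fs => has (eval_hat ax axb ay) fs
  end.

Definition set_prefix (j : nat) (b a : nat -> bool) : nat -> bool :=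
  fun i => if i < j then b i else a i.

Definition ones : nat -> bool := fun _ => true.
(* the bit-vector 1^{j-1}0 (0-based: position j-1 is 0) *)
Definition ones_then_zero (j : nat) : nat -> bool := fun i => i != j.-1.

From mathcomp Require Import all_boot.

Set Implicit Arguments.
Unset Strict Implicit.
Unset Printing Implicit Defensive.

(* Under the all-ones prefix, lowering x_j (resp. xbar_j) to 0 switches off exactly the
   leaves labelled x_j (resp. ~x_j).  So it suffices that whenever a leaf valuation v
   satisfies a wDNNF formula, it still does after switching off the leaves of l or after
   switching off those of ~l.  This goes by induction: at an AND node, l and ~l can only
   both occur below a single conjunct, and the switch that works for that conjunct leaves
   every other conjunct untouched; an OR node inherits the choice of a satisfied
   disjunct. *)

Notation nnf0 := (NOr [::]).

Section NnfInd.
Variable P : nnf -> Prop.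
Hypothesis P_lit : forall b i p, P (NLit b i p).
Hypothesis P_and : forall fs, (forall i, i < size fs -> P (nth nnf0 fs i)) -> P (NAnd fs).
Hypothesis P_or : forall fs, (forall i, i < size fs -> P (nth nnf0 fs i)) -> P (NOr fs).

Fixpoint nnf_nth_ind (f : nnf) : P f :=
  let fix children (fs : seq nnf) : forall i, i < size fs -> P (nth nnf0 fs i) :=
    match fs return forall i, i < size fs -> P (nth nnf0 fs i) with
    | [::] => fun i lt_i0 => False_ind _ (notF lt_i0)
    | g :: gs => fun i => if i is i'.+1 return i < (size gs).+1 -> P (nth nnf0 (g :: gs) i)
                         then children gs i' else fun _ => nnf_nth_ind g
    end in
  match f with
  | NLit b i p => P_lit b i p
  | NAnd fs => P_and (children fs)
  | NOr fs => P_or (children fs)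
  end.
End NnfInd.

Section NthExtensionality.
Variables (T : Type) (x0 : T) (a1 a2 : pred T) (s : seq T).
Hypothesis eq_a_nth : forall i, i < size s -> a1 (nth x0 s i) = a2 (nth x0 s i).

Lemma eq_all_nth : all a1 s = all a2 s.
Proof.
by apply/(all_nthP x0)/(all_nthP x0) => a_s i lt_i; move: (a_s i lt_i); rewrite eq_a_nth.
Qed.

Lemma eq_has_nth : has a1 s = has a2 s.
Proof.
by apply/(has_nthP x0)/(has_nthP x0) => -[i lt_i a_i]; exists i; rewrite // ?eq_a_nth // -eq_a_nth.
Qed.

End NthExtensionality.

Fixpoint eval_nnf (v : literal -> bool) (f : nnf) : bool :=
  match f with
  | NLit b i p => v (b, i, p)
  | NAnd fs => all (eval_nnf v) fs
  | NOr fs => has (eval_nnf v) fs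
  end.

Lemma mem_lits_children (l : literal) (fs : seq nnf) :
  (l \in flatten (map lits fs)) = has (fun g => l \in lits g) fs.
Proof. by elim: fs => //= g fs IH; rewrite mem_cat IH. Qed.

Lemma mem_lits_nth (fs : seq nnf) (i : nat) :
  i < size fs -> {subset lits (nth nnf0 fs i) <= flatten (map lits fs)}.
Proof. by move=> lt_i l l_in; rewrite mem_lits_children; apply/(has_nthP nnf0); exists i. Qed.

Lemma eq_in_eval_nnf (v1 v2 : literal -> bool) (f : nnf) :
  {in lits f, v1 =1 v2} -> eval_nnf v1 f = eval_nnf v2 f.
Proof.
elim/nnf_nth_ind: f => [b i p|fs IH|fs IH] /= eq_v; first by apply: eq_v; rewrite mem_seq1.
all: first [apply: (eq_all_nth (x0 := nnf0)) | apply: (eq_has_nth (x0 := nnf0))].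
all: by move=> i lt_i; apply: IH => // l /(mem_lits_nth lt_i)/eq_v.
Qed.

Definition drop_lit (l : literal) (v : literal -> bool) : literal -> bool :=
  fun m => (m != l) && v m.

Lemma eval_drop_lit_notin (v : literal -> bool) (l : literal) (f : nnf) :
  l \notin lits f -> eval_nnf (drop_lit l v) f = eval_nnf v f.
Proof. by move=> l_notin; apply: eq_in_eval_nnf => m m_in; rewrite /drop_lit (memPn l_notin). Qed.

Lemma neg_lit_neq (l : literal) : neg_lit l != l.
Proof. by case: l => [[b i] []]; rewrite /neg_lit /= xpair_eqE eqxx. Qed.

Lemma and_ok_complementary (fs : seq nnf) (l : literal) (p q : nat) :
  and_ok fs -> p < size fs -> q < size fs ->
  l \in lits (nth nnf0 fs p) -> neg_lit l \in lits (nth nnf0 fs q) -> p = q.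
Proof.
move=> /forallP ok_fs lt_p lt_q l_p nl_q; apply/eqP; apply: contraTT isT => ne_pq.
move: (ok_fs (Ordinal lt_p)) => /forallP /(_ (Ordinal lt_q)) /implyP /(_ ne_pq) /hasPn.
by move=> /(_ l l_p); rewrite nl_q.
Qed.

Lemma all_eval_drop_lit (v : literal -> bool) (l : literal) (fs : seq nnf) (p : nat) :
  p < size fs -> (forall i, i < size fs -> i != p -> l \notin lits (nth nnf0 fs i)) ->
  all (eval_nnf v) fs -> eval_nnf (drop_lit l v) (nth nnf0 fs p) ->
  all (eval_nnf (drop_lit l v)) fs.
Proof.
move=> lt_p l_notin /(all_nthP nnf0) v_fs drop_p; apply/(all_nthP nnf0) => i lt_i.
have [-> // | ne_ip] := eqVneq i p.
by rewrite eval_drop_lit_notin ?v_fs ?l_notin.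
Qed.

Lemma wDNNF_eval_drop_lit (v : literal -> bool) (l : literal) (f : nnf) :
  wDNNF f -> eval_nnf v f ->
  eval_nnf (drop_lit l v) f || eval_nnf (drop_lit (neg_lit l) v) f.
Proof.
elim/nnf_nth_ind: f => [b i p|fs IH|fs IH].
- move=> _ /= v_m; rewrite /drop_lit v_m !andbT -negb_and.
  by apply/negP => /andP[/eqP-> ]; rewrite eq_sym (negbTE (neg_lit_neq l)).
- move=> /andP[/(all_nthP nnf0) w_fs ok_fs] v_and.
  have [l_in | l_notin] := boolP (l \in lits (NAnd fs)); last first.
    by rewrite eval_drop_lit_notin ?v_and.
  have [nl_in | nl_notin] := boolP (neg_lit l \in lits (NAnd fs)); last first.
    by rewrite (eval_drop_lit_notin _ nl_notin) v_and orbT.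
  move: l_in nl_in; rewrite /= !mem_lits_children.
  move=> /(has_nthP nnf0)[p lt_p l_p] /(has_nthP nnf0)[q lt_q nl_q].
  have {q lt_q nl_q}nl_p : neg_lit l \in lits (nth nnf0 fs p).
    by rewrite (and_ok_complementary ok_fs lt_p lt_q l_p nl_q).
  have v_p : eval_nnf v (nth nnf0 fs p) by move/(all_nthP nnf0): v_and; apply.
  case/orP: (IH p lt_p (w_fs p lt_p) v_p) => [drop_p | drop_p]; apply/orP; [left | right];
    apply: (all_eval_drop_lit lt_p _ v_and drop_p) => i lt_i; apply: contra => lit_i.
  + by rewrite (and_ok_complementary ok_fs lt_i lt_p lit_i nl_p).
  + by rewrite (and_ok_complementary ok_fs lt_p lt_i l_p lit_i).
- move=> /(all_nthP nnf0) w_fs /(has_nthP nnf0)[i lt_i v_i].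
  case/orP: (IH i lt_i (w_fs i lt_i) v_i) => [drop_i | drop_i]; apply/orP; [left | right];
    by apply/(has_nthP nnf0); exists i.
Qed.

Definition hat_valuation (ax axb ay : nat -> bool) : literal -> bool :=
  fun '(b, i, p) => if b then (if p then ax i else axb i) else (if p then ay i else ~~ ay i).

Lemma eval_hatE (ax axb ay : nat -> bool) (f : nnf) :
  eval_hat ax axb ay f = eval_nnf (hat_valuation ax axb ay) f.
Proof.
elim/nnf_nth_ind: f => [[] i []|fs IH|fs IH] //=.
- exact: (eq_all_nth (x0 := nnf0)).
- exact: (eq_has_nth (x0 := nnf0)).
Qed.

Lemma set_prefix_ones_then_zero (j : nat) (a : nat -> bool) (i : nat) : 0 < j ->
  set_prefix j (ones_then_zero j) a i = (i != j.-1) && set_prefix j ones a i.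
Proof.
rewrite /set_prefix /ones_then_zero /ones => j_gt0.
case: ltnP => [_ | le_ji]; first by rewrite andbT.
by rewrite (gtn_eqF (leq_trans _ le_ji)) // ltn_predL.
Qed.

Section LowerLastPrefixBit.
Variables (j : nat) (ax axb ay : nat -> bool).
Hypothesis j_gt0 : 0 < j.

Lemma hat_valuation_lower_x :
  hat_valuation (set_prefix j (ones_then_zero j) ax) axb ay
  =1 drop_lit (true, j.-1, true) (hat_valuation (set_prefix j ones ax) axb ay).
Proof.
by case=> [[[] i] []] //=; rewrite /drop_lit !xpair_eqE /= ?andbT ?andbF ?set_prefix_ones_then_zero.
Qed.

Lemma hat_valuation_lower_xbar :
  hat_valuation ax (set_prefix j (ones_then_zero j) axb) ay
  =1 drop_lit (true, j.-1, false) (hat_valuation ax (set_prefix j ones axb) ay).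
Proof.
by case=> [[[] i] []] //=; rewrite /drop_lit !xpair_eqE /= ?andbT ?andbF ?set_prefix_ones_then_zero.
Qed.

End LowerLastPrefixBit.

Theorem mainTheorem8 (n : nat) (F : nnf) :
  xvars_below n F -> wDNNF F ->
  forall j : nat, 1 <= j <= n ->
  forall ax axb ay : nat -> bool,
    eval_hat (set_prefix j ones ax) (set_prefix j ones axb) ay F ->
    eval_hat (set_prefix j (ones_then_zero j) ax) (set_prefix j ones axb) ay F
    || eval_hat (set_prefix j ones ax) (set_prefix j (ones_then_zero j) axb) ay F.
Proof.
move=> _ wF j /andP[j_gt0 _] ax axb ay; rewrite !eval_hatE.
rewrite (eq_in_eval_nnf (in1W (hat_valuation_lower_x _ _ _ j_gt0))).
rewrite (eq_in_eval_nnf (in1W (hat_valuation_lower_xbar _ _ _ j_gt0))).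
exact: wDNNF_eval_drop_lit.
Qed.
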